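(* Let $T$ be the tree with two vertices $v,w$ of degree $3$ and four leaves (edges $e_1,e_2$ join $v$ to leaves, $e_3=vw$, edges $e_4,e_5$ join $w$ to leaves), with bias $b$ on each of $e_1,e_2,e_4,e_5$ and bias $1-4b$ on $e_3$, where $b$ is the unique zero of $105b^3-90b^2+24b-2$ in $0<b<1/4$. Then \[E_T=\frac{4(1-3b)(5b^2-5b+1)}{(7b-2)^2},\] which lies in $(0.8797,0.8798)$. Hence $c^*=0.8798$ is $5$-admissible.
   Context: A biased tree $T$ on $k$ edges is a tree with edges $e_1,\dots,e_k$ in which every non-leaf vertex has degree $3$, together with nonnegative numbers (biases) $b_1,\dots,b_k$ with $b_1+\cdots+b_k=1$. Let $\mathcal P$ be the set of subgraphs of $T$ that are maximal (under inclusion) among subgraphs that are unions of vertex-disjoint paths, each path beginning and ending at leaf vertices of $T$. Define $f_T(x_1,\dots,x_k)=\max_{P\in\mathcal P}\sum_{i:e_i\in E(P)}b_ix_i$ and \[E_T=\int_0^\infty\!\!\cdots\int_0^\infty f_T(x_1,\dots,x_k)e^{-x_1-\cdots-x_k}\,dx_1\cdots dx_k.\] A positive constant $c^*$ is $k$-admissible if $E_T<c^*$ for some biased tree $T$ on $k$ edges. *)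

From Stdlib Require Import Reals List.
Import ListNotations.
Open Scope R_scope.

Definition improper_int0 (g : R -> R) (l : R) : Prop :=
  exists pr : forall M : R, 0 <= M -> Riemann_integrable g 0 M,
    forall eps : R, eps > 0 ->
      exists M0 : R, forall (M : R) (hM : 0 <= M),
        M0 <= M -> Rabs (RiemannInt (pr M hM) - l) < eps.

(** Iterated integrals over [0,oo)^n; the outermost variable is the first
    argument. *)
Definition int2 (F : R -> R -> R) (l : R) : Prop :=
  exists g : R -> R,
    (forall x, 0 <= x -> improper_int0 (F x) (g x)) /\ improper_int0 g l.
Definition int3 (F : R -> R -> R -> R) (l : R) : Prop :=
  exists g : R -> R,
    (forall x, 0 <= x -> int2 (F x) (g x)) /\ improper_int0 g l.
Definition int4 (F : R -> R -> R -> R -> R) (l : R) : Prop :=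
  exists g : R -> R,
    (forall x, 0 <= x -> int3 (F x) (g x)) /\ improper_int0 g l.
Definition int5 (F : R -> R -> R -> R -> R -> R) (l : R) : Prop :=
  exists g : R -> R,
    (forall x, 0 <= x -> int4 (F x) (g x)) /\ improper_int0 g l.

(** * The tree T of the statement
    Vertices: 0,1,2,3 are leaves, 4 = v, 5 = w.
    Edges (indexed 1..5): e1 = {0,4}, e2 = {1,4}, e3 = {4,5} = vw,
    e4 = {5,2}, e5 = {5,3}. *)

Definition is_vertex (u : nat) : Prop := (u < 6)%nat.
Definition is_leaf (u : nat) : Prop := (u < 4)%nat.
Definition is_edge_index (i : nat) : Prop := (1 <= i <= 5)%nat.

Definition edge_ends (i : nat) : nat * nat :=
  match i with
  | 1%nat => (0%nat, 4%nat)
  | 2%nat => (1%nat, 4%nat)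
  | 3%nat => (4%nat, 5%nat)
  | 4%nat => (5%nat, 2%nat)
  | 5%nat => (5%nat, 3%nat)
  | _ => (0%nat, 0%nat)
  end.

Definition joins (i u v : nat) : Prop :=
  is_edge_index i /\
  (edge_ends i = (u, v) \/ edge_ends i = (v, u)).

Definition consecutive (p : list nat) (u v : nat) : Prop :=
  exists l1 l2, p = l1 ++ u :: v :: l2.

Definition leaf_path (p : list nat) : Prop :=
  NoDup p /\ (2 <= length p)%nat /\
  Forall is_vertex p /\
  (forall u v, consecutive p u v -> exists i, joins i u v) /\
  is_leaf (hd 0%nat p) /\ is_leaf (last p 0%nat).

Definition path_uses (p : list nat) (i : nat) : Prop :=
  exists u v, joins i u v /\ consecutive p u v.

Definition path_union (V E : nat -> Prop) : Prop :=
  exists ps : list (list nat),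
    Forall leaf_path ps /\
    (forall j k : nat, (j < length ps)%nat -> (k < length ps)%nat -> j <> k ->
       forall u, In u (nth j ps []) -> ~ In u (nth k ps [])) /\
    (forall u, V u <-> exists p, In p ps /\ In u p) /\
    (forall i, E i <-> exists p, In p ps /\ path_uses p i).

Definition subset (A B : nat -> Prop) : Prop := forall a, A a -> B a.

Definition in_calP (V E : nat -> Prop) : Prop :=
  path_union V E /\
  forall V' E', path_union V' E' -> subset V V' -> subset E E' ->
    subset V' V /\ subset E' E.

Definition bias (b : R) (i : nat) : R :=
  match i with
  | 3%nat => 1 - 4 * b
  | _ => b
  end.

Definition weight (b : R) (E : nat -> Prop) (x : nat -> R) (w : R) : Prop :=
  exists c : nat -> R,
    (forall i, is_edge_index i ->
       (E i -> c i = bias b i * x i) /\ (~ E i -> c i = 0)) /\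
    w = c 1%nat + c 2%nat + c 3%nat + c 4%nat + c 5%nat.

Definition coords (x1 x2 x3 x4 x5 : R) (i : nat) : R :=
  match i with
  | 1%nat => x1 | 2%nat => x2 | 3%nat => x3 | 4%nat => x4 | 5%nat => x5
  | _ => 0
  end.

Definition is_fT (b : R) (f : R -> R -> R -> R -> R -> R) : Prop :=
  forall x1 x2 x3 x4 x5 : R,
    let x := coords x1 x2 x3 x4 x5 in
    (exists V E, in_calP V E /\ weight b E x (f x1 x2 x3 x4 x5)) /\
    (forall V E w, in_calP V E -> weight b E x w -> w <= f x1 x2 x3 x4 x5).

Definition E_T_is (b : R) (l : R) : Prop :=
  exists f, is_fT b f /\
    int5 (fun x1 x2 x3 x4 x5 =>
            f x1 x2 x3 x4 x5 * exp (- (x1 + x2 + x3 + x4 + x5))) l.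

Definition b_spec (b : R) : Prop :=
  0 < b < 1/4 /\ 105 * b ^ 3 - 90 * b ^ 2 + 24 * b - 2 = 0.

(** T has exactly twelve leaf paths as vertex sequences ([leaf_path_cases]); each meets v or
      w, and those crossing the bridge run leaf-v-w-leaf ([leaf_path_bridge]).  Hence a
      union of vertex-disjoint leaf paths either avoids e3, or lies inside one long path
      ([path_union_shape]); the maximal ones (the family 𝒫) are the pair of short paths
      0-v-1, 2-w-3 and the four long paths ([calP_shape]).  Comparing their weights gives
      f_T = b(x1+x2+x4+x5) + max(0, (1-4b)x3 - b min(x1,x2) - b min(x4,x5)) ([fT_is]).
    - Analysis.  On [0,+oo) the improper integral of a function equal to an exponential
      polynomial (A + B t) e^(-t) + C e^(-m t) on [0,p] and to another one on [p,+oo) is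
      read off explicit antiderivatives ([improper_int0_expoly2]); Coquelicot's Riemann
      integral is used and converted to the Stdlib one of the statement.
    - Integrating f_T e^(-x1-...-x5) successively in x5, x4, x3, x2, x1 keeps every
      integrand of that shape ([integrate_x5] ... [integrate_x1]), and yields the closed
      form 4(1-3b)(5b^2-5b+1)/(7b-2)^2 for every 0 < b < 1/4 ([E_T_closed_form]).
    - Numerics.  The cubic 105b^3-90b^2+24b-2 has a unique zero in (0,1/4), which lies in
      (0.172, 0.1722); there the closed form lies in (0.8797, 0.8798). *)

From Coquelicot Require Import Coquelicot.
From Stdlib Require Import Reals Lra Lia List Classical_Prop.
Import ListNotations.
Open Scope R_scope.

(** ** Leaf paths of T *)

(** The index of the edge joining [u] and [v], or 0 if they are not adjacent. *)
Definition edge_index (u v : nat) : nat :=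
  match u, v with
  | 0, 4 | 4, 0 => 1
  | 1, 4 | 4, 1 => 2
  | 4, 5 | 5, 4 => 3
  | 5, 2 | 2, 5 => 4
  | 5, 3 | 3, 5 => 5
  | _, _ => 0
  end%nat.

Lemma joins_iff i u v : joins i u v <-> (1 <= i)%nat /\ i = edge_index u v.
Proof.
  unfold joins, is_edge_index. split.
  - intros [hi [e|e]];
      destruct i as [|[|[|[|[|[|i]]]]]]; try lia; simpl in e; injection e as <- <-;
      simpl; lia.
  - intros [hi ->].
    destruct u as [|[|[|[|[|[|u]]]]]]; destruct v as [|[|[|[|[|[|v]]]]]];
      simpl in *; try lia; split; auto; lia.
Qed.

Definition adjacent (u v : nat) : Prop := exists i, joins i u v.

Lemma adjacent_iff u v : adjacent u v <-> (1 <= edge_index u v)%nat.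
Proof.
  unfold adjacent. split.
  - intros [i h]. apply joins_iff in h. lia.
  - intro h. exists (edge_index u v). apply joins_iff. lia.
Qed.

Fixpoint chain (Rel : nat -> nat -> Prop) (p : list nat) : Prop :=
  match p with
  | x :: ((y :: _) as q) => Rel x y /\ chain Rel q
  | _ => True
  end.

Lemma consecutive_nil u v : ~ consecutive [] u v.
Proof. intros [l1 [l2 e]]. destruct l1; discriminate. Qed.

Lemma consecutive_single x u v : ~ consecutive [x] u v.
Proof.
  intros [l1 [l2 e]]. destruct l1 as [|y [|z l1]]; discriminate.
Qed.

Lemma consecutive_cons x y l u v :
  consecutive (x :: y :: l) u v <-> (u = x /\ v = y) \/ consecutive (y :: l) u v.
Proof.
  split.
  - intros [[|z l1] [l2 e]]; injection e.
    + intros _ -> ->. left; auto.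
    + intros e' _. right. exists l1, l2. exact e'.
  - intros [[-> ->]|[l1 [l2 e]]].
    + exists [], l. reflexivity.
    + exists (x :: l1), l2. rewrite e. reflexivity.
Qed.

Lemma chain_iff Rel p : chain Rel p <-> (forall u v, consecutive p u v -> Rel u v).
Proof.
  induction p as [|x [|y l] IH].
  - split; [intros _ u v h; contradiction (consecutive_nil u v h) | intros; exact I].
  - split; [intros _ u v h; contradiction (consecutive_single x u v h) | intros; exact I].
  - simpl chain. rewrite IH. split.
    + intros [hxy hl] u v h. apply consecutive_cons in h as [[-> ->]|h]; auto.
    + intros h. split.
      * apply h, consecutive_cons. left; auto.
      * intros u v h'. apply h, consecutive_cons. right; exact h'.
Qed.

Lemma consecutive_rev p u v : consecutive (rev p) u v <-> consecutive p v u.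
Proof.
  assert (key : forall q u v, consecutive q u v -> consecutive (rev q) v u).
  { intros q u' v' [l1 [l2 ->]]. exists (rev l2), (rev l1).
    rewrite rev_app_distr. simpl. rewrite <- !app_assoc. reflexivity. }
  split; [rewrite <- (rev_involutive p) at 2|]; apply key.
Qed.

Fixpoint path_edges (p : list nat) : list nat :=
  match p with
  | x :: ((y :: _) as q) => edge_index x y :: path_edges q
  | _ => []
  end.

Lemma in_path_edges p i :
  In i (path_edges p) <-> exists u v, consecutive p u v /\ i = edge_index u v.
Proof.
  induction p as [|x [|y l] IH].
  - split; [contradiction | intros [u [v [h _]]]; contradiction (consecutive_nil u v h)].
  - split; [contradiction | intros [u [v [h _]]]; contradiction (consecutive_single x u v h)].
  - change (edge_index x y = i \/ In i (path_edges (y :: l)) <->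
            exists u v, consecutive (x :: y :: l) u v /\ i = edge_index u v).
    rewrite IH. split.
    + intros [<- | [u [v [hc ->]]]].
      * exists x, y. split; [apply consecutive_cons; auto | reflexivity].
      * exists u, v. split; [apply consecutive_cons; auto | reflexivity].
    + intros [u [v [hc ->]]]. apply consecutive_cons in hc as [[-> ->] | hc]; eauto.
Qed.

Lemma path_uses_iff p i : path_uses p i <-> (1 <= i)%nat /\ In i (path_edges p).
Proof.
  unfold path_uses. rewrite in_path_edges. split.
  - intros [u [v [hj hc]]]. apply joins_iff in hj as [hi ->]. eauto.
  - intros [hi [u [v [hc ->]]]]. exists u, v. split; [apply joins_iff; auto | exact hc].
Qed.

Lemma joins_sym i u v : joins i u v -> joins i v u.
Proof. intros [hi [e|e]]; split; auto. Qed.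

Lemma path_uses_rev p i : path_uses (rev p) i <-> path_uses p i.
Proof.
  unfold path_uses. split; intros [u [v [hj hc]]]; exists v, u;
    split; try apply joins_sym, hj; apply consecutive_rev; exact hc.
Qed.

Definition leaf_paths : list (list nat) :=
  [[0;4;1]; [1;4;0]; [2;5;3]; [3;5;2];
   [0;4;5;2]; [0;4;5;3]; [1;4;5;2]; [1;4;5;3];
   [2;5;4;0]; [2;5;4;1]; [3;5;4;0]; [3;5;4;1]]%nat.

(** Case analysis on the successor [v] of a known vertex along a path. *)
Ltac next_vertex H :=
  apply adjacent_iff in H;
  match type of H with
  | context [edge_index _ ?v] => destruct v as [|[|[|[|[|[|v]]]]]]; simpl in H; try lia
  end.

(** Refutes a vertex sequence that repeats a vertex. *)
Ltac nodup_contra H :=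
  solve [exfalso; repeat (let h := fresh "h" in apply NoDup_cons_iff in H as [h H]; simpl in h);
         intuition].

(** Closes a path that ends here: it ends at a non-leaf, or it is in [leaf_paths]. *)
Ltac close_path Hl :=
  solve [simpl in Hl; lia | simpl; repeat (first [left; reflexivity | right])].

(** A leaf path is determined step by step by the adjacencies of T; a fifth vertex would
    repeat one, so there are no others. *)
Lemma leaf_path_cases p : leaf_path p -> In p leaf_paths.
Proof.
  intros [Hnd [Hlen [_ [Hc [Hh Hl]]]]]. apply chain_iff in Hc.
  destruct p as [|x0 [|x1 r]]; simpl in Hlen; try lia.
  unfold is_leaf in Hh, Hl; simpl in Hh.
  destruct Hc as [A01 Hc].
  (* the first vertex is a leaf; each further vertex is a neighbour of the previous one,
     distinct from all earlier ones, and the sequence may stop only at a leaf *)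
  destruct x0 as [|[|[|[|x0]]]]; try lia; next_vertex A01;
    (destruct r as [|x2 r]; [close_path Hl|]); destruct Hc as [A12 Hc]; next_vertex A12;
    try nodup_contra Hnd;
    (destruct r as [|x3 r]; [close_path Hl|]); destruct Hc as [A23 Hc]; next_vertex A23;
    try nodup_contra Hnd;
    (destruct r as [|x4 r]; [close_path Hl|]); destruct Hc as [A34 Hc]; next_vertex A34;
    nodup_contra Hnd.
Qed.

Lemma leaf_paths_valid p : In p leaf_paths -> leaf_path p.
Proof.
  intro Hp. simpl in Hp.
  repeat destruct Hp as [<- | Hp]; try contradiction;
    (split; [repeat constructor; simpl; intuition lia|]);
    (split; [simpl; lia|]);
    (split; [apply Forall_forall; intros u hu; simpl in hu; unfold is_vertex; intuition lia|]);
    (split; [apply chain_iff; simpl; repeat split; apply adjacent_iff; simpl; lia|]);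
    unfold is_leaf; simpl; lia.
Qed.

(** Every leaf path passes through an internal vertex; this forces disjoint paths to avoid
    a path that contains both v and w. *)
Lemma leaf_path_center p : leaf_path p -> In 4%nat p \/ In 5%nat p.
Proof.
  intro H. apply leaf_path_cases in H. simpl in H.
  repeat destruct H as [<- | H]; try contradiction; simpl; tauto.
Qed.

(** Identifies a listed long path as [a-v-w-c] or its reversal. *)
Ltac bridge_ends :=
  split; [lia | split; [lia | first [left; reflexivity | right; reflexivity]]].

Lemma leaf_path_bridge p : leaf_path p -> path_uses p 3 ->
  exists a c, (a < 2)%nat /\ (2 <= c < 4)%nat /\ (p = [a; 4; 5; c] \/ p = rev [a; 4; 5; c])%nat.
Proof.
  intros H H3. apply path_uses_iff in H3 as [_ H3]. apply leaf_path_cases in H. simpl in H.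
  repeat destruct H as [<- | H]; try contradiction; simpl in H3; try (exfalso; lia);
    first [ solve [exists 0%nat, 2%nat; bridge_ends] | solve [exists 0%nat, 3%nat; bridge_ends]
          | solve [exists 1%nat, 2%nat; bridge_ends] | solve [exists 1%nat, 3%nat; bridge_ends] ].
Qed.

(** ** The family 𝒫 *)

Definition V_of (ps : list (list nat)) (u : nat) : Prop := exists p, In p ps /\ In u p.
Definition E_of (ps : list (list nat)) (i : nat) : Prop := exists p, In p ps /\ path_uses p i.

Definition short_pair : list (list nat) := [[0; 4; 1]; [2; 5; 3]]%nat.
Definition long_path (a c : nat) : list (list nat) := [[a; 4; 5; c]]%nat.

Lemma E_of_short i : E_of short_pair i <-> In i [1; 2; 4; 5]%nat.
Proof.
  unfold E_of. split.
  - intros [p [hp hu]]. apply path_uses_iff in hu as [_ hu].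
    simpl in hp. destruct hp as [<- | [<- | []]]; simpl in *; tauto.
  - intro h. simpl in h.
    assert (h1 : (1 <= i)%nat) by lia.
    destruct h as [<- | [<- | [<- | [<- | []]]]];
      [exists [0; 4; 1]%nat | exists [0; 4; 1]%nat | exists [2; 5; 3]%nat | exists [2; 5; 3]%nat];
      (split; [simpl; tauto | apply path_uses_iff; simpl; tauto]).
Qed.

Lemma V_of_short u : V_of short_pair u <-> (u < 6)%nat.
Proof.
  unfold V_of. split.
  - intros [p [hp hu]]. simpl in hp. destruct hp as [<- | [<- | []]]; simpl in hu; lia.
  - intro h. assert (h' : In u [0; 4; 1]%nat \/ In u [2; 5; 3]%nat) by (simpl; lia).
    destruct h' as [h' | h']; eexists; (split; [|exact h']); simpl; tauto.
Qed.

Lemma E_of_long a c i : E_of (long_path a c) i <-> path_uses [a; 4; 5; c]%nat i.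
Proof.
  unfold E_of, long_path. simpl. split; [intros [p [[<- | []] h]]; exact h | eauto].
Qed.

Lemma V_of_long a c u : V_of (long_path a c) u <-> In u [a; 4; 5; c]%nat.
Proof.
  unfold V_of, long_path. simpl. split; [intros [p [[<- | []] h]]; exact h | eauto].
Qed.

Lemma path_union_intro ps : Forall leaf_path ps ->
  (forall j k : nat, (j < length ps)%nat -> (k < length ps)%nat -> j <> k ->
     forall u, In u (nth j ps []) -> ~ In u (nth k ps [])) ->
  path_union (V_of ps) (E_of ps).
Proof. intros hlp hdisj. exists ps. repeat split; auto. Qed.

Lemma path_union_vertex V E u : path_union V E -> V u -> (u < 6)%nat.
Proof.
  intros [ps [Hf [_ [HV _]]]] h. apply HV in h as [p [hp hu]].
  rewrite Forall_forall in Hf. destruct (Hf p hp) as [_ [_ [Hv _]]].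
  rewrite Forall_forall in Hv. apply Hv, hu.
Qed.

Ltac leaf_cases a c :=
  assert (a = 0 \/ a = 1)%nat as [-> | ->] by lia;
  assert (c = 2 \/ c = 3)%nat as [-> | ->] by lia.

Lemma path_union_shape V E : path_union V E ->
  subset E (E_of short_pair) \/
  exists a c, (a < 2)%nat /\ (2 <= c < 4)%nat /\
    subset V (V_of (long_path a c)) /\ subset E (E_of (long_path a c)).
Proof.
  intros [ps [Hf [Hd [HV HE]]]]. rewrite Forall_forall in Hf.
  destruct (classic (E 3%nat)) as [H3 | H3].
  - right. apply HE in H3 as [p [Hp Hu]].
    destruct (leaf_path_bridge p (Hf p Hp) Hu) as [a [c [ha [hc hpe]]]].
    assert (Hin : forall u, In u p <-> In u [a; 4; 5; c]%nat).
    { intro u. destruct hpe as [-> | ->]; [tauto | apply in_rev]. }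
    assert (Huse : forall i, path_uses p i <-> path_uses [a; 4; 5; c]%nat i).
    { intro i. destruct hpe as [-> | ->]; [tauto | apply path_uses_rev]. }
    (* every path of the union meets v or w, hence meets p, hence is p *)
    assert (Honly : forall q, In q ps -> q = p).
    { intros q Hq.
      destruct (In_nth ps q [] Hq) as [k [hk ek]].
      destruct (In_nth ps p [] Hp) as [j [hj ej]].
      destruct (Nat.eq_dec k j) as [-> | ne]; [congruence|].
      exfalso. destruct (leaf_path_center q (Hf q Hq)) as [h | h];
        [apply (Hd k j hk hj ne 4%nat) | apply (Hd k j hk hj ne 5%nat)];
        rewrite ?ek, ?ej; try apply Hin; simpl; tauto. }
    exists a, c. split; [exact ha | split; [exact hc | split]].
    + intros u Hu'. apply HV in Hu' as [q [Hq Hin']]. rewrite (Honly q Hq) in Hin'.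
      apply V_of_long, Hin, Hin'.
    + intros i Hi. apply HE in Hi as [q [Hq Hu']]. rewrite (Honly q Hq) in Hu'.
      apply E_of_long, Huse, Hu'.
  - left. intros i Ei. apply E_of_short.
    assert (Ei' := Ei). apply HE in Ei' as [p [_ [u [v [[hi _] _]]]]].
    unfold is_edge_index in hi.
    assert (i <> 3%nat) by (intros ->; contradiction). simpl. lia.
Qed.

Lemma long_path_edges a c i : (a < 2)%nat -> (2 <= c < 4)%nat ->
  E_of (long_path a c) i <-> (i = a + 1 \/ i = 3 \/ i = c + 2)%nat.
Proof.
  intros ha hc. rewrite E_of_long, path_uses_iff.
  leaf_cases a c; simpl; lia.
Qed.

Lemma short_pair_path_union : path_union (V_of short_pair) (E_of short_pair).
Proof.
  apply path_union_intro.
  - apply Forall_forall. intros p hp. apply leaf_paths_valid.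
    simpl in hp. destruct hp as [<- | [<- | []]]; simpl; tauto.
  - intros [|[|j]] [|[|k]]; simpl; intros; lia.
Qed.

Lemma long_path_path_union a c : (a < 2)%nat -> (2 <= c < 4)%nat ->
  path_union (V_of (long_path a c)) (E_of (long_path a c)).
Proof.
  intros ha hc. apply path_union_intro.
  - apply Forall_forall. intros p [<- | []]. apply leaf_paths_valid.
    leaf_cases a c; simpl; tauto.
  - intros j k hj hk. simpl in hj, hk. lia.
Qed.

Lemma short_pair_in_calP : in_calP (V_of short_pair) (E_of short_pair).
Proof.
  split; [exact short_pair_path_union|].
  intros V' E' Hpu _ HE. split.
  - intros u hu. apply V_of_short, (path_union_vertex V' E'), hu. exact Hpu.
  - destruct (path_union_shape V' E' Hpu) as [H | [a [c [ha [hc [_ H]]]]]]; [exact H|].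
    (* a long path contains only one of the pendant edges e1, e2 *)
    exfalso.
    assert (h1 := H 1%nat (HE 1%nat (proj2 (E_of_short 1%nat) ltac:(simpl; tauto)))).
    assert (h2 := H 2%nat (HE 2%nat (proj2 (E_of_short 2%nat) ltac:(simpl; tauto)))).
    apply long_path_edges in h1; [|assumption..]. apply long_path_edges in h2; [|assumption..].
    lia.
Qed.


Lemma long_path_in_calP a c : (a < 2)%nat -> (2 <= c < 4)%nat ->
  in_calP (V_of (long_path a c)) (E_of (long_path a c)).
Proof.
  intros ha hc. split; [apply long_path_path_union; assumption|].
  intros V' E' Hpu _ HE.
  assert (Huse : forall i, (i = a + 1 \/ i = 3 \/ i = c + 2)%nat -> E' i).
  { intros i hi. apply HE, long_path_edges; assumption. }
  destruct (path_union_shape V' E' Hpu) as [H | [a' [c' [ha' [hc' [HV' HE']]]]]].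
  - (* the larger union contains the bridge, so it is not made of short paths *)
    exfalso. assert (h3 := H 3%nat (Huse 3%nat ltac:(lia))).
    apply E_of_short in h3. simpl in h3. lia.
  - (* the long path of the larger union has the same end edges, hence is the same *)
    assert (ea := HE' _ (Huse (a + 1)%nat ltac:(lia))).
    assert (ec := HE' _ (Huse (c + 2)%nat ltac:(lia))).
    apply long_path_edges in ea; [|assumption..]. apply long_path_edges in ec; [|assumption..].
    assert (a' = a) as -> by lia. assert (c' = c) as -> by lia.
    split; assumption.
Qed.

Lemma calP_shape V E : in_calP V E ->
  (forall i, E i <-> E_of short_pair i) \/
  exists a c, (a < 2)%nat /\ (2 <= c < 4)%nat /\ (forall i, E i <-> E_of (long_path a c) i).
Proof.
  intros [Hpu Hmax].
  destruct (path_union_shape V E Hpu) as [H | [a [c [ha [hc [HV HE]]]]]].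
  - left. intro i. split; [apply H|].
    apply (Hmax _ _ short_pair_path_union); [|exact H].
    intros u hu. apply V_of_short, (path_union_vertex V E); assumption.
  - right. exists a, c. split; [exact ha | split; [exact hc|]].
    intro i. split; [apply HE|].
    apply (Hmax _ _ (long_path_path_union a c ha hc)); assumption.
Qed.

(** ** The function f_T *)

Definition edge_sum (b : R) (es : list nat) (x : nat -> R) : R :=
  let term i := if existsb (Nat.eqb i) es then bias b i * x i else 0 in
  term 1%nat + term 2%nat + term 3%nat + term 4%nat + term 5%nat.

Lemma weight_iff b E es x w : (forall i, is_edge_index i -> (E i <-> In i es)) ->
  (weight b E x w <-> w = edge_sum b es x).
Proof.
  intros HE.
  assert (Hterm : forall i, is_edge_index i -> (E i <-> existsb (Nat.eqb i) es = true)).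
  { intros i hi. rewrite HE, existsb_exists by exact hi. split.
    - intro h. exists i. split; [exact h | apply Nat.eqb_refl].
    - intros [j [hj e]]. apply Nat.eqb_eq in e. subst j. exact hj. }
  unfold weight, edge_sum. split.
  - intros [c [Hc ->]].
    assert (Hci : forall i, is_edge_index i ->
              c i = if existsb (Nat.eqb i) es then bias b i * x i else 0).
    { intros i hi. destruct (Hc i hi) as [h1 h2].
      destruct (existsb (Nat.eqb i) es) eqn:e.
      - apply h1, Hterm; assumption.
      - apply h2. rewrite Hterm by exact hi. congruence. }
    rewrite !Hci by (unfold is_edge_index; lia). reflexivity.
  - intros ->. exists (fun i => if existsb (Nat.eqb i) es then bias b i * x i else 0).
    split; [|reflexivity].
    intros i hi. rewrite Hterm by exact hi.
    destruct (existsb (Nat.eqb i) es); split; intro h; congruence.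
Qed.

Lemma short_pair_weight b x :
  weight b (E_of short_pair) x (b * x 1%nat + b * x 2%nat + b * x 4%nat + b * x 5%nat).
Proof.
  apply weight_iff with [1; 2; 4; 5]%nat.
  - intros i _. apply E_of_short.
  - unfold edge_sum. simpl. ring.
Qed.

Lemma long_path_weight b x a c : (a < 2)%nat -> (2 <= c < 4)%nat ->
  weight b (E_of (long_path a c)) x
    (b * x (a + 1)%nat + (1 - 4 * b) * x 3%nat + b * x (c + 2)%nat).
Proof.
  intros ha hc. apply weight_iff with [a + 1; 3; c + 2]%nat.
  - intros i _. rewrite long_path_edges by assumption. simpl. split; intro; lia.
  - unfold edge_sum. leaf_cases a c; simpl; ring.
Qed.

Lemma calP_weight b V E x1 x2 x3 x4 x5 w : in_calP V E ->
  weight b E (coords x1 x2 x3 x4 x5) w ->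
  w = b * (x1 + x2) + b * (x4 + x5) \/
  exists y z, (y = x1 \/ y = x2) /\ (z = x4 \/ z = x5) /\ w = b * y + (1 - 4 * b) * x3 + b * z.
Proof.
  intros HP Hw. destruct (calP_shape V E HP) as [H | [a [c [ha [hc H]]]]].
  - left. rewrite (weight_iff b E [1; 2; 4; 5]%nat) in Hw.
    + rewrite Hw. unfold edge_sum. simpl. ring.
    + intros i _. rewrite H. apply E_of_short.
  - right. rewrite (weight_iff b E [a + 1; 3; c + 2]%nat) in Hw.
    + rewrite Hw. unfold edge_sum.
      leaf_cases a c; [exists x1, x4 | exists x1, x5 | exists x2, x4 | exists x2, x5];
        simpl; (split; [tauto | split; [tauto | ring]]).
    + intros i _. rewrite H, long_path_edges by assumption. simpl. split; intro; lia.
Qed.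

Definition fT (b x1 x2 x3 x4 x5 : R) : R :=
  b * (x1 + x2) + b * (x4 + x5) +
  Rmax 0 ((1 - 4 * b) * x3 - b * Rmin x1 x2 - b * Rmin x4 x5).

(** f_T in closed form: keep the pendant edges, or trade the two lighter pendant edges
    for the bridge when this is profitable. *)
Lemma fT_is b : 0 <= b -> is_fT b (fT b).
Proof.
  intros hb x1 x2 x3 x4 x5. cbv zeta. unfold fT.
  set (D := (1 - 4 * b) * x3 - b * Rmin x1 x2 - b * Rmin x4 x5).
  split.
  - destruct (Rle_dec D 0) as [hD | hD].
    + exists (V_of short_pair), (E_of short_pair). split; [exact short_pair_in_calP|].
      rewrite Rmax_left by exact hD.
      replace (b * (x1 + x2) + b * (x4 + x5) + 0) with
        (b * x1 + b * x2 + b * x4 + b * x5) by ring.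
      apply short_pair_weight.
    + rewrite Rmax_right by lra. unfold D.
      destruct (Rle_dec x2 x1) as [h12 | h12]; destruct (Rle_dec x5 x4) as [h45 | h45];
        [rewrite (Rmin_right x1 x2), (Rmin_right x4 x5) by lra
        |rewrite (Rmin_right x1 x2), (Rmin_left x4 x5) by lra
        |rewrite (Rmin_left x1 x2), (Rmin_right x4 x5) by lra
        |rewrite (Rmin_left x1 x2), (Rmin_left x4 x5) by lra];
        [exists (V_of (long_path 0 2)), (E_of (long_path 0 2))
        |exists (V_of (long_path 0 3)), (E_of (long_path 0 3))
        |exists (V_of (long_path 1 2)), (E_of (long_path 1 2))
        |exists (V_of (long_path 1 3)), (E_of (long_path 1 3))];
        (split; [apply long_path_in_calP; lia|]);
        match goal with |- weight _ (E_of (long_path ?a ?c)) _ ?w =>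
          replace w with (b * coords x1 x2 x3 x4 x5 (a + 1)%nat + (1 - 4 * b) * x3 +
                          b * coords x1 x2 x3 x4 x5 (c + 2)%nat) by (simpl; ring);
          apply long_path_weight; lia
        end.
  - intros V E w HP Hw.
    assert (m1 := Rmult_le_compat_l b _ _ hb (Rmin_l x1 x2)).
    assert (m2 := Rmult_le_compat_l b _ _ hb (Rmin_r x1 x2)).
    assert (m4 := Rmult_le_compat_l b _ _ hb (Rmin_l x4 x5)).
    assert (m5 := Rmult_le_compat_l b _ _ hb (Rmin_r x4 x5)).
    assert (hmax := Rmax_l 0 D). assert (hmaxD := Rmax_r 0 D).
    destruct (calP_weight b V E x1 x2 x3 x4 x5 w HP Hw) as [-> | [y [z [hy [hz ->]]]]];
      [lra|].
    assert (eD : D = (1 - 4 * b) * x3 - b * Rmin x1 x2 - b * Rmin x4 x5) by reflexivity.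
    clearbody D. destruct hy as [-> | ->]; destruct hz as [-> | ->]; lra.
Qed.

(** ** Improper integrals of piecewise exponential polynomials *)

(** [expoly A B C m t = (A + B t) e^(-t) + C e^(-m t)], and [expoly_tail A B C m t] is its
    integral over [t, +oo) (for m > 0). *)
Definition expoly (A B C m t : R) : R := (A + B * t) * exp (- t) + C * exp (- (m * t)).
Definition expoly_tail (A B C m t : R) : R :=
  (A + B + B * t) * exp (- t) + C / m * exp (- (m * t)).

Lemma expoly_tail_derive A B C m t :
  m <> 0 -> is_derive (expoly_tail A B C m) t (- expoly A B C m t).
Proof. intro hm. unfold expoly_tail, expoly. auto_derive; [easy | field; exact hm]. Qed.

Lemma expoly_continuous A B C m t : continuous (expoly A B C m) t.
Proof.
  apply (@ex_derive_continuous R_AbsRing R_NormedModule). unfold expoly. auto_derive. easy.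
Qed.

Lemma exp_neg_lin_vanishes m : 0 < m -> is_lim (fun t => exp (- (m * t))) p_infty 0.
Proof.
  intro hm. apply (is_lim_comp exp (fun t => - (m * t)) p_infty 0 m_infty).
  - exact is_lim_exp_m.
  - apply is_lim_opp with (l := p_infty).
    replace p_infty with (Rbar_mult m p_infty) at 2.
    + apply is_lim_scal_l, is_lim_id.
    + simpl. destruct (Rle_dec 0 m); [|lra]. destruct (Rle_lt_or_eq_dec 0 m r); [reflexivity|lra].
  - exists 0. intros; discriminate.
Qed.

Lemma id_exp_neg_vanishes : is_lim (fun t => t * exp (- t)) p_infty 0.
Proof.
  apply is_lim_ext with (fun t => - ((- t) * exp (- t))); [intro; ring|].
  replace (Finite 0) with (Rbar_opp 0) by (simpl; f_equal; ring).
  apply is_lim_opp.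
  apply (is_lim_comp (fun y => y * exp y) (fun t => - t) p_infty 0 m_infty).
  - exact is_lim_mul_exp_m.
  - apply (is_lim_opp (fun t => t) p_infty p_infty), is_lim_id.
  - exists 0. intros; discriminate.
Qed.

Lemma expoly_tail_vanishes A B C m : 0 < m -> is_lim (expoly_tail A B C m) p_infty 0.
Proof.
  intro hm. unfold expoly_tail.
  apply is_lim_ext with
    (fun t => (A + B) * exp (- (1 * t)) + B * (t * exp (- t)) + C / m * exp (- (m * t))).
  { intro t. rewrite Rmult_1_l. ring. }
  replace 0 with ((A + B) * 0 + B * 0 + C / m * 0) by ring.
  apply is_lim_plus'; [apply is_lim_plus'|]; apply (is_lim_scal_l _ _ p_infty 0).
  - apply exp_neg_lin_vanishes; lra.
  - apply id_exp_neg_vanishes.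
  - apply exp_neg_lin_vanishes; exact hm.
Qed.

Lemma improper_int0_intro (g : R -> R) (l : R) :
  (forall M, 0 <= M -> ex_RInt g 0 M) ->
  is_lim (fun M => RInt g 0 M) p_infty l ->
  improper_int0 g l.
Proof.
  intros hint hlim.
  exists (fun M hM => ex_RInt_Reals_0 g 0 M (hint M hM)).
  intros eps heps. apply is_lim_spec in hlim.
  destruct (hlim (mkposreal eps heps)) as [M0 hM0].
  exists (M0 + 1). intros M hM hMM. rewrite <- RInt_Reals. apply hM0. lra.
Qed.

Lemma is_RInt_antiderivative (g h T : R -> R) (u v : R) :
  u <= v -> (forall x, continuous h x) -> (forall x, is_derive T x (- h x)) ->
  (forall x, u <= x <= v -> g x = h x) -> is_RInt g u v (T u - T v).
Proof.
  intros huv hcont hder heq.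
  apply is_RInt_ext with h.
  { intros x hx. rewrite Rmin_left, Rmax_right in hx by exact huv. symmetry; apply heq; lra. }
  assert (hint : is_RInt h u v (minus (- T v) (- T u))).
  { apply (is_RInt_derive (V := R_CompleteNormedModule) (fun x => - T x) h);
      [|intros; apply hcont].
    intros x _. replace (h x) with (- (- h x)) by ring. apply (is_derive_opp T), hder. }
  replace (T u - T v) with (minus (- T v) (- T u)) by (unfold minus, plus, opp; simpl; ring).
  exact hint.
Qed.

Lemma improper_int0_two_pieces (g g1 g2 T1 T2 : R -> R) (p : R) :
  0 <= p ->
  (forall x, continuous g1 x) -> (forall x, continuous g2 x) ->
  (forall x, is_derive T1 x (- g1 x)) -> (forall x, is_derive T2 x (- g2 x)) ->
  is_lim T2 p_infty 0 ->
  (forall x, 0 <= x <= p -> g x = g1 x) -> (forall x, p <= x -> g x = g2 x) ->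
  improper_int0 g (T1 0 - T1 p + T2 p).
Proof.
  intros hp hc1 hc2 hd1 hd2 hlim heq1 heq2.
  assert (first_piece : forall M, 0 <= M <= p -> is_RInt g 0 M (T1 0 - T1 M)).
  { intros M hM. apply (is_RInt_antiderivative g g1); try tauto.
    intros x hx. apply heq1. lra. }
  assert (both_pieces : forall M, p <= M -> is_RInt g 0 M (T1 0 - T1 p + T2 p - T2 M)).
  { intros M hM.
    replace (T1 0 - T1 p + T2 p - T2 M) with (plus (T1 0 - T1 p) (T2 p - T2 M))
      by (unfold plus; simpl; ring).
    apply (is_RInt_Chasles (V := R_NormedModule)) with p; [apply first_piece; lra|].
    apply (is_RInt_antiderivative g g2); auto. intros x hx. apply heq2; lra. }
  apply improper_int0_intro.
  - intros M hM. destruct (Rle_dec M p) as [h|h].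
    + eexists; apply first_piece; lra.
    + eexists; apply both_pieces; lra.
  - apply is_lim_ext_loc with (fun M => T1 0 - T1 p + T2 p - T2 M).
    + exists p. intros M hM. symmetry. apply is_RInt_unique, both_pieces. lra.
    + set (l := T1 0 - T1 p + T2 p).
      assert (hl := is_lim_minus' (fun _ => l) T2 p_infty l 0 (is_lim_const l p_infty) hlim).
      rewrite Rminus_0_r in hl. exact hl.
Qed.

Lemma improper_int0_expoly2 (g : R -> R) (p A1 B1 C1 m1 A2 B2 C2 m2 l : R) :
  0 <= p -> 0 < m1 -> 0 < m2 ->
  (forall x, 0 <= x <= p -> g x = expoly A1 B1 C1 m1 x) ->
  (forall x, p <= x -> g x = expoly A2 B2 C2 m2 x) ->
  l = A1 + B1 + C1 / m1 - expoly_tail A1 B1 C1 m1 p + expoly_tail A2 B2 C2 m2 p ->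
  improper_int0 g l.
Proof.
  intros hp hm1 hm2 heq1 heq2 ->.
  replace (A1 + B1 + C1 / m1) with (expoly_tail A1 B1 C1 m1 0)
    by (unfold expoly_tail; rewrite !Rmult_0_r, Ropp_0, exp_0; field; lra).
  apply improper_int0_two_pieces with (expoly A1 B1 C1 m1) (expoly A2 B2 C2 m2);
    auto using expoly_continuous, expoly_tail_derive, expoly_tail_vanishes with real.
Qed.

Lemma improper_int0_expoly (g : R -> R) (A B C m l : R) : 0 < m ->
  (forall x, 0 <= x -> g x = expoly A B C m x) -> l = A + B + C / m -> improper_int0 g l.
Proof.
  intros hm heq ->.
  apply improper_int0_expoly2 with 0 A B C m A B C m; try lra.
  - intros x hx. apply heq. lra.
  - intros x hx. apply heq. lra.
Qed.

(** ** The five successive integrations *)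

Lemma exp_neg_add u t : exp (- (u + t)) = exp (- u) * exp (- t).
Proof. rewrite <- exp_plus. f_equal. ring. Qed.

Lemma exp_neg_double t : exp (- (2 * t)) = exp (- t) * exp (- t).
Proof. rewrite <- exp_plus. f_equal. ring. Qed.

Lemma exp_neg_mul_add u v t : exp (- (u * t)) * exp (- (v * t)) = exp (- ((u + v) * t)).
Proof. rewrite <- exp_plus. f_equal. ring. Qed.

Definition integrand (b x1 x2 x3 x4 x5 : R) : R :=
  fT b x1 x2 x3 x4 x5 * exp (- (x1 + x2 + x3 + x4 + x5)).

(** [excess_x5 b D y] is the integral over t in [0, +oo) of max(0, D - b min(y, t)) e^(-t):
    the expected gain of the bridge once the edge x5 is integrated out. *)
Definition excess_x5 (b D y : R) : R :=
  if Rle_dec D 0 then 0 else D - b + b * exp (- Rmin y (D / b)).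

(** [J4], [J3], [J2], [J1]: the integrand integrated over x5, then x4, x3, x2. *)
Definition J4 (b x1 x2 x3 x4 : R) : R :=
  exp (- (x1 + x2 + x3 + x4)) *
  (b * (x1 + x2) + b * x4 + b + excess_x5 b ((1 - 4 * b) * x3 - b * Rmin x1 x2) x4).

(** Integration in x5: the bridge excess is a truncated linear function of x5. *)
Lemma integrate_x5 b x1 x2 x3 x4 : 0 < b -> 0 <= x1 -> 0 <= x2 -> 0 <= x4 ->
  improper_int0 (integrand b x1 x2 x3 x4) (J4 b x1 x2 x3 x4).
Proof.
  intros hb h1 h2 h4. unfold J4, integrand, fT, excess_x5.
  set (P := b * (x1 + x2)).
  set (D := (1 - 4 * b) * x3 - b * Rmin x1 x2).
  set (E := exp (- (x1 + x2 + x3 + x4))).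
  assert (eE : forall t, exp (- (x1 + x2 + x3 + x4 + t)) = E * exp (- t))
    by (intro; apply exp_neg_add).
  assert (hmin : forall t, 0 <= t -> 0 <= Rmin x4 t) by (intros; apply Rmin_glb; lra).
  destruct (Rle_dec D 0) as [hD|hD].
  - (* the bridge never pays *)
    apply improper_int0_expoly with (E * (P + b * x4)) (E * b) 0 1; [lra| |field].
    intros t ht. rewrite eE, Rmax_left; [unfold expoly; ring|].
    specialize (hmin t ht). nra.
  - assert (hDb : 0 < D / b) by (apply Rdiv_lt_0_compat; lra).
    assert (hbD : b * (D / b) = D) by (field; lra).
    destruct (Rle_dec x4 (D / b)) as [hy|hy].
    + (* the excess D - b * min(x4, t) stays positive *)
      rewrite Rmin_left by lra.
      apply improper_int0_expoly2 with x4 (E * (P + b * x4 + D)) 0 0 1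
        (E * (P + D)) (E * b) 0 1; [lra | lra | lra | | | unfold expoly_tail; field].
      * intros t ht. rewrite eE, Rmin_right, Rmax_right by nra. unfold expoly; ring.
      * intros t ht. rewrite eE, Rmin_left, Rmax_right by nra. unfold expoly; ring.
    + (* the excess vanishes once t >= D / b *)
      rewrite Rmin_right by lra.
      apply improper_int0_expoly2 with (D / b) (E * (P + b * x4 + D)) 0 0 1
        (E * (P + b * x4)) (E * b) 0 1; [lra | lra | lra | | | unfold expoly_tail; field; lra].
      * intros t ht. rewrite eE, Rmin_right, Rmax_right by nra. unfold expoly; ring.
      * intros t ht. rewrite eE, Rmax_left by (apply Rmin_case; nra). unfold expoly; ring.
Qed.

(** [excess_x45 b D] is the integral over y in [0, +oo) of [excess_x5 b D y e^(-y)]. *)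
Definition excess_x45 (b D : R) : R :=
  if Rle_dec D 0 then 0 else D - b / 2 + b / 2 * exp (- (2 * (D / b))).

Definition J3 (b x1 x2 x3 : R) : R :=
  exp (- (x1 + x2 + x3)) *
  (b * (x1 + x2) + 2 * b + excess_x45 b ((1 - 4 * b) * x3 - b * Rmin x1 x2)).

Lemma integrate_x4 b x1 x2 x3 : 0 < b ->
  improper_int0 (J4 b x1 x2 x3) (J3 b x1 x2 x3).
Proof.
  intros hb. unfold J4, J3, excess_x45, excess_x5.
  set (P := b * (x1 + x2)).
  set (D := (1 - 4 * b) * x3 - b * Rmin x1 x2).
  set (E := exp (- (x1 + x2 + x3))).
  assert (eE : forall t, exp (- (x1 + x2 + x3 + t)) = E * exp (- t))
    by (intro; apply exp_neg_add).
  destruct (Rle_dec D 0) as [hD|hD].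
  - apply improper_int0_expoly with (E * (P + b)) (E * b) 0 1; [lra| |field].
    intros t ht. rewrite eE. unfold expoly; ring.
  - (* the minimum in excess_x5 switches from x4 to D / b at x4 = D / b *)
    assert (hDb : 0 < D / b) by (apply Rdiv_lt_0_compat; lra).
    apply improper_int0_expoly2 with (D / b) (E * (P + D)) (E * b) (E * b) 2
      (E * (P + D + b * exp (- (D / b)))) (E * b) 0 1; [lra | lra | lra | | | ].
    + intros t ht. rewrite eE, Rmin_left by lra. unfold expoly. rewrite exp_neg_double. ring.
    + intros t ht. rewrite eE, Rmin_right by lra. unfold expoly. ring.
    + unfold expoly_tail. rewrite exp_neg_double. field. lra.
Qed.

(** The coefficient [excess_coef b] of the remaining bridge contribution. *)
Definition excess_coef (b : R) : R := 2 * (1 - 4 * b) ^ 2 / (b + 2 * (1 - 4 * b)).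

Definition J2 (b x1 x2 : R) : R :=
  exp (- (x1 + x2)) *
  (b * (x1 + x2) + 2 * b + excess_coef b * exp (- (b / (1 - 4 * b) * Rmin x1 x2))).

(** Integration in x3: the bridge contributes only for x3 > b min(x1,x2) / (1-4b). *)
Lemma integrate_x3 b x1 x2 : 0 < b < 1/4 -> 0 <= x1 -> 0 <= x2 ->
  improper_int0 (J3 b x1 x2) (J2 b x1 x2).
Proof.
  intros hb h1 h2. unfold J3, J2, excess_x45, excess_coef.
  set (P := b * (x1 + x2)).
  set (c := 1 - 4 * b).
  set (m := Rmin x1 x2).
  set (E := exp (- (x1 + x2))).
  assert (hc : 0 < c) by (unfold c; lra).
  assert (hm : 0 <= m) by (apply Rmin_glb; lra).
  assert (eE : forall t, exp (- (x1 + x2 + t)) = E * exp (- t)) by (intro; apply exp_neg_add).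
  (* the bridge term (1 - 4b) x3 - b m becomes positive at x3 = p; beyond p the
     factor e^(-2 (c s - b m) / b) merges with e^(-s) into e^(2m) e^(-m2 s) *)
  set (p := b * m / c).
  assert (hp : 0 <= p) by (apply Rdiv_le_0_compat; nra).
  assert (hcp : c * p = b * m) by (unfold p; field; lra).
  set (m2 := 1 + 2 * c / b).
  assert (hm2 : 0 < m2).
  { assert (0 < 2 * c / b) by (apply Rdiv_lt_0_compat; lra). unfold m2; lra. }
  assert (hshift : forall s,
    exp (2 * m) * exp (- (m2 * s)) = exp (- s) * exp (- (2 * ((c * s - b * m) / b)))).
  { intro s. rewrite <- !exp_plus. f_equal. unfold m2. field. lra. }
  apply improper_int0_expoly2 with p (E * (P + 2 * b)) 0 0 1
    (E * (P + 2 * b - b * m - b / 2)) (E * c) (E * (b / 2) * exp (2 * m)) m2;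
    [lra | lra | exact hm2 | | | ].
  - intros s hs. rewrite eE.
    destruct (Rle_dec (c * s - b * m) 0) as [h|h]; [unfold expoly; ring | nra].
  - intros s hs. rewrite eE. unfold expoly.
    replace (E * (b / 2) * exp (2 * m) * exp (- (m2 * s)))
      with (E * (b / 2) * (exp (2 * m) * exp (- (m2 * s)))) by ring.
    rewrite hshift.
    destruct (Rle_dec (c * s - b * m) 0) as [h|h]; [|field; lra].
    assert (hcs : c * s = b * m) by nra.
    replace (c * s - b * m) with 0 by lra.
    replace (2 * (0 / b)) with 0 by (field; lra).
    replace (E * c * s) with (E * (b * m)) by (rewrite Rmult_assoc, hcs; reflexivity).
    rewrite Ropp_0, exp_0. field.
  - assert (hexp : exp (2 * m) * exp (- (m2 * p)) = exp (- p)).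
    { rewrite hshift, hcp. replace (2 * ((b * m - b * m) / b)) with 0 by (field; lra).
      rewrite Ropp_0, exp_0. ring. }
    replace (b / c * m) with p by (unfold p; field; lra).
    unfold expoly_tail.
    replace (E * (b / 2) * exp (2 * m) / m2 * exp (- (m2 * p)))
      with (E * (b / 2) / m2 * (exp (2 * m) * exp (- (m2 * p)))) by (field; lra).
    rewrite hexp.
    replace (E * c * p) with (E * (b * m)) by (rewrite <- hcp; ring).
    unfold m2. field. split; lra.
Qed.

Definition J1 (b x : R) : R :=
  let be := b / (1 - 4 * b) in
  exp (- x) * (b * x + 3 * b + excess_coef b / (1 + be) +
               excess_coef b * be / (1 + be) * exp (- ((1 + be) * x))).

(** Integration in x2: [Rmin x1 x2] switches from x2 to x1 at x2 = x1. *)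
Lemma integrate_x2 b x : 0 < b < 1/4 -> 0 <= x -> improper_int0 (J2 b x) (J1 b x).
Proof.
  intros hb hx. unfold J2, J1.
  set (K := excess_coef b).
  set (be := b / (1 - 4 * b)).
  assert (hbe : 0 < be) by (apply Rdiv_lt_0_compat; lra).
  set (E := exp (- x)).
  assert (eE : forall t, exp (- (x + t)) = E * exp (- t)) by (intro; apply exp_neg_add).
  assert (e1 : forall t, exp (- t) * exp (- (be * t)) = exp (- ((1 + be) * t))).
  { intro t. rewrite <- exp_neg_mul_add, Rmult_1_l. reflexivity. }
  apply improper_int0_expoly2 with x (E * (b * x + 2 * b)) (E * b) (E * K) (1 + be)
    (E * (b * x + 2 * b + K * exp (- (be * x)))) (E * b) 0 1; [lra | lra | lra | | | ].
  - intros t ht. rewrite eE, Rmin_right by lra. unfold expoly. rewrite <- e1. ring.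
  - intros t ht. rewrite eE, Rmin_left by lra. unfold expoly. ring.
  - unfold expoly_tail. rewrite <- (e1 x). field. lra.
Qed.

Lemma integrate_x1 b : 0 < b < 1/4 ->
  improper_int0 (J1 b) (4 * b + 2 * excess_coef b / (2 + b / (1 - 4 * b))).
Proof.
  intros hb. unfold J1.
  set (K := excess_coef b).
  set (be := b / (1 - 4 * b)).
  assert (hbe : 0 < be) by (apply Rdiv_lt_0_compat; lra).
  apply improper_int0_expoly with (3 * b + K / (1 + be)) b (K * be / (1 + be)) (2 + be);
    [lra | | field; lra].
  intros t ht. unfold expoly.
  replace (2 + be) with (1 + (1 + be)) by ring.
  rewrite <- (exp_neg_mul_add 1 (1 + be)), Rmult_1_l. field. lra.
Qed.

(** ** The root b and the numerical value *)

(** The zero of the cubic in (0, 1/4) lies in (0.172, 0.1722): the cubic is negative on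
    (0, 0.172] and positive on [0.1722, 1/4). *)
Lemma root_bounds b : b_spec b -> 0.172 < b < 0.1722.
Proof.
  intros [[H1 H2] H]. split.
  - destruct (Rlt_or_le 0.172 b) as [h|h]; [exact h|]. exfalso.
    assert (0 <= (0.172 - b) * b) by (apply Rmult_le_pos; lra).
    assert (0 <= (0.172 - b) * b * b) by (apply Rmult_le_pos; lra).
    nra.
  - destruct (Rlt_or_le b 0.1722) as [h|h]; [exact h|]. exfalso.
    assert (0 <= (b - 0.1722) * (1/4 - b)) by (apply Rmult_le_pos; lra).
    assert (0 <= (b - 0.1722) * (1/4 - b) * b) by (apply Rmult_le_pos; lra).
    nra.
Qed.

(** The cubic changes sign on [0.15, 0.2]. *)
Lemma root_exists : exists b, b_spec b.
Proof.
  assert (hc : continuity (fun b => 105 * b ^ 3 - 90 * b ^ 2 + 24 * b - 2)) by reg.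
  destruct (IVT _ 0.15 0.2 hc ltac:(lra) ltac:(simpl; lra) ltac:(simpl; lra)) as [b [hb eb]].
  exists b. split; [lra | exact eb].
Qed.

(** Between two zeros the cubic's divided difference is positive, so the zero is unique. *)
Lemma root_unique b1 b2 : b_spec b1 -> b_spec b2 -> b1 = b2.
Proof.
  intros h1 h2.
  destruct (root_bounds b1 h1) as [l1 u1]. destruct (root_bounds b2 h2) as [l2 u2].
  destruct h1 as [_ e1]. destruct h2 as [_ e2].
  assert (hQ : 0 < 105 * (b1 * b1 + b1 * b2 + b2 * b2) - 90 * (b1 + b2) + 24) by nra.
  assert (hz : (b1 - b2) * (105 * (b1 * b1 + b1 * b2 + b2 * b2) - 90 * (b1 + b2) + 24) = 0)
    by (simpl in e1, e2; nra).
  apply Rmult_integral in hz as [hz|hz]; lra.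
Qed.

Lemma value_bounds b : 0.172 < b < 0.1722 ->
  8797 / 10000 < 4 * (1 - 3 * b) * (5 * b ^ 2 - 5 * b + 1) / (7 * b - 2) ^ 2 < 8798 / 10000.
Proof.
  intros [h1 h2].
  assert (hp : 0 < (7 * b - 2) ^ 2) by nra.
  assert (0 <= (b - 0.172) * (0.1722 - b)) by (apply Rmult_le_pos; lra).
  assert (0 <= (b - 0.172) * (0.1722 - b) * b) by (apply Rmult_le_pos; lra).
  assert (e : 4 * (1 - 3 * b) * (5 * b ^ 2 - 5 * b + 1) / (7 * b - 2) ^ 2 * (7 * b - 2) ^ 2
             = 4 * (1 - 3 * b) * (5 * b ^ 2 - 5 * b + 1)) by (field; lra).
  split; apply Rmult_lt_reg_r with ((7 * b - 2) ^ 2); try exact hp; rewrite e; nra.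
Qed.

Lemma E_T_closed_form b : 0 < b < 1/4 ->
  E_T_is b (4 * (1 - 3 * b) * (5 * b ^ 2 - 5 * b + 1) / (7 * b - 2) ^ 2).
Proof.
  intros hb. exists (fT b). split; [apply fT_is; lra|].
  change (int5 (integrand b) (4 * (1 - 3 * b) * (5 * b ^ 2 - 5 * b + 1) / (7 * b - 2) ^ 2)).
  replace (4 * (1 - 3 * b) * (5 * b ^ 2 - 5 * b + 1) / (7 * b - 2) ^ 2)
    with (4 * b + 2 * excess_coef b / (2 + b / (1 - 4 * b)))
    by (unfold excess_coef; field; repeat split; lra).
  exists (J1 b). split; [|apply integrate_x1; exact hb].
  intros x1 h1. exists (J2 b x1). split; [|apply integrate_x2; assumption].
  intros x2 h2. exists (J3 b x1 x2). split; [|apply integrate_x3; assumption].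
  intros x3 _. exists (J4 b x1 x2 x3). split; [|apply integrate_x4; lra].
  intros x4 h4. apply integrate_x5; lra.
Qed.

Theorem mainTheorem8 :
  (exists! b : R, b_spec b) /\
  forall b : R, b_spec b ->
    let v := 4 * (1 - 3 * b) * (5 * b ^ 2 - 5 * b + 1) / (7 * b - 2) ^ 2 in
    E_T_is b v /\ 8797 / 10000 < v < 8798 / 10000 /\
    (exists ET, E_T_is b ET /\ ET < 8798 / 10000).
Proof.
  split.
  - destruct root_exists as [b hb]. exists b. split; [exact hb|].
    intros b' hb'. apply root_unique; assumption.
  - intros b hb. cbv zeta.
    assert (HE := E_T_closed_form b (proj1 hb)).
    assert (HB := value_bounds b (root_bounds b hb)).
    split; [exact HE | split; [exact HB |]].
    eexists. split; [exact HE | apply HB].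
Qed.
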